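(* In the Classified Reallocation algorithm (with power-of-two laxities), in any round, the number of clients reallocated out of the big channel during the processing of that round's arrival is at most half of the number of clients active in the system at that round.
   Context: Model: discrete time; each client $c_i$ has arrival time, departure time and laxity $w_i$ (a power of $2$), and must transmit at least once in every $w_i$ consecutive time steps while active; one transmission per channel per time step. A round is the period between consecutive events, each round containing exactly one arrival or departure. A reallocation is a change of the channel of a client. For $x>0$, $\lceil\lceil x\rceil\rceil$ denotes the smallest power of $2$ not smaller than $x$. Classified Reallocation algorithm. Channels: one \emph{big channel} (all its clients transmit with period $\tau/2$) and \emph{$w$-channels} for powers of two $w$ (clients transmit with period $w$; at most $w$ clients; \emph{full} when holding $w$). State: $n$ (active clients, initially $0$), threshold $\tau$ (initially $2$). Arrival of $c_i$: $n\leftarrow n+1$. If $2\lceil\lceil n\rceil\rceil>\tau$: $\tau\leftarrow 2\lceil\lceil n\rceil\rceil$; each big-channel client $c_j$ with $w_j<\tau/2$ is reallocated to the non-full $w_j$-channel of minimum load (a new one reserved if needed); remaining big-channel clients get period $\tau/2$. Then if $w_i\ge\tau$, $c_i$ goes to the big channel; otherwise to the non-full $w_i$-channel of minimum load (new one reserved if needed). Departure of $c_i$ from channel $c$: $n\leftarrow n-1$. If $c$ is not the big channel: release $c$ if empty; otherwise if some $w_i$-channel $c'\ne c$ is not full, move one client from $c'$ to $c$. Then if $2\lceil\lceil n\rceil\rceil<\tau$: $\tau\leftarrow 2\lceil\lceil n\rceil\rceil$, big-channel clients get period $\tau/2$, and every $w$-channel with $w>2\tau$ has all its clients reallocated to the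 big channel and is released. *)

From mathcomp Require Import all_boot.
Set Implicit Arguments. Unset Strict Implicit. Unset Printing Implicit Defensive.

Definition client := (nat * nat)%type.
Definition cid (c : client) : nat := c.1.
Definition laxity (c : client) : nat := 2 ^ c.2.

(* A w-channel: (e, clients) is a (2^e)-channel holding the listed clients. *)
Definition wchan := (nat * seq client)%type.
Definition wchan_full (ch : wchan) : bool := size ch.2 >= 2 ^ ch.1.

(* ceil2 x = smallest power of 2 not smaller than x (ceil2 0 = 1). *)
Definition ceil2 (x : nat) : nat := 2 ^ (up_log 2 x).

Record state := State {
  nact : nat;
  tau  : nat;
  big  : seq client;
  chans : seq wchan
}.

Definition init_state : state := State 0 2 [::] [::].

Inductive event := Arrive of nat & nat (* id, laxity exponent *) | Depart of nat.

Definition dflt_chan : wchan := (0, [::]).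
Definition load (cs : seq wchan) (i : nat) : nat := size (nth dflt_chan cs i).2.

Definition nonfull_idx (cs : seq wchan) (e : nat) : seq nat :=
  [seq i <- iota 0 (size cs) |
     ((nth dflt_chan cs i).1 == e) && ~~ wchan_full (nth dflt_chan cs i)].

Definition pick_min (cs : seq wchan) (l : seq nat) : option nat :=
  match l with
  | [::] => None
  | i :: l' => Some (foldl (fun b j => if load cs j < load cs b then j else b) i l')
  end.

Definition insert_client (cs : seq wchan) (c : client) : seq wchan :=
  match pick_min cs (nonfull_idx cs c.2) with
  | Some i => set_nth dflt_chan cs i (c.2, rcons (nth dflt_chan cs i).2 c)
  | None => rcons cs (c.2, [:: c])
  end.

Definition remove_at (T : Type) (s : seq T) (i : nat) : seq T :=
  take i s ++ drop i.+1 s.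

Definition arrive (s : state) (c : client) : state :=
  let n' := (nact s).+1 in
  let '(t', b1, cs1) :=
    if 2 * ceil2 n' > tau s then
      let t' := 2 * ceil2 n' in
      let moved := [seq d <- big s | laxity d < t' %/ 2] in
      let stay  := [seq d <- big s | ~~ (laxity d < t' %/ 2)] in
      (t', stay, foldl insert_client (chans s) moved)
    else (tau s, big s, chans s) in
  if laxity c >= t' then State n' t' (rcons b1 c) cs1
  else State n' t' b1 (insert_client cs1 c).

Definition depart_tau (s : state) : state :=
  let n := nact s in
  if 2 * ceil2 n < tau s then
    let t' := 2 * ceil2 n in
    let isbig (ch : wchan) := 2 ^ ch.1 > 2 * t' in
    State n t' (big s ++ flatten [seq ch.2 | ch <- chans s & isbig ch])
          [seq ch <- chans s | ~~ isbig ch]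
  else s.

Definition depart (s : state) (i : nat) : state :=
  let n' := (nact s).-1 in
  if has (fun d => cid d == i) (big s) then
    depart_tau (State n' (tau s) [seq d <- big s | cid d != i] (chans s))
  else
    let cs := chans s in
    let k := find (fun ch : wchan => has (fun d => cid d == i) ch.2) cs in
    let ch := nth dflt_chan cs k in
    let ch1 := (ch.1, [seq d <- ch.2 | cid d != i]) in
    let cs1 :=
      if k >= size cs then cs
      else if nilp ch1.2 then remove_at cs k
      else
        let cand := [seq j <- nonfull_idx cs ch.1 | j != k] in
        match cand with
        | [::] => set_nth dflt_chan cs k ch1
        | j :: _ =>
            let chj := nth dflt_chan cs j in
            match chj.2 with
            | [::] => set_nth dflt_chan cs k ch1
            | d :: rest =>
                set_nth dflt_chan (set_nth dflt_chan cs k (ch1.1, rcons ch1.2 d))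
                        j (chj.1, rest)
            end
        end in
    depart_tau (State n' (tau s) (big s) cs1).

Definition step (s : state) (ev : event) : state :=
  match ev with
  | Arrive i e => arrive s (i, e)
  | Depart i => depart s i
  end.

Definition run (es : seq event) : state := foldl step init_state es.

Fixpoint valid_from (act : seq nat) (es : seq event) : bool :=
  match es with
  | [::] => true
  | Arrive i _ :: es' => (i \notin act) && valid_from (i :: act) es'
  | Depart i :: es' => (i \in act) && valid_from (rem i act) es'
  end.

Definition valid (es : seq event) : bool := valid_from [::] es.

Definition moved_out_of_big (s s' : state) : nat :=
  count (fun d => d \notin big s') (big s).

From mathcomp Require Import all_boot.
From mathcomp Require Import zify.
Set Implicit Arguments. Unset Strict Implicit.

(* The algorithm maintains [tau = 2 * ceil2 n] and keeps on the big channel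
   only clients of laxity at least [tau / 2], of which at most [tau / 4] have
   laxity below [tau].  At an arrival the threshold rises only when [ceil2]
   jumps from [n] to [n + 1], which forces [ceil2 n <= n]; the clients then
   moved out have laxity below [ceil2 (n + 1) <= tau], so there are at most
   [tau / 4 = ceil2 n / 2 <= n / 2] of them.  The bound on urgent big-channel
   clients survives the raise because the new threshold is at least [4 n],
   and it survives a lowering of the threshold at a departure because every
   client then on the big channel has laxity at least the new threshold. *)

Lemma leq_ceil2 n : n <= ceil2 n.
Proof. exact: up_logP. Qed.

Lemma ceil2_min n k : n <= 2 ^ k -> ceil2 n <= 2 ^ k.
Proof. by move=> le_n; rewrite /ceil2 leq_pexp2l // up_log_min. Qed.

Lemma ceil2_homo : {homo ceil2 : m n / m <= n}.
Proof. by move=> m n le_mn; rewrite /ceil2 leq_pexp2l // leq_up_log. Qed.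

Lemma ceil2S n : ceil2 n.+1 <= 2 * ceil2 n.
Proof.
rewrite /ceil2 -expnS; apply: ceil2_min; rewrite expnS.
by case: n => [|n] //; have := leq_ceil2 n.+1; rewrite /ceil2; lia.
Qed.

Lemma ceil2_ltn_double m n : ceil2 m < ceil2 n -> 2 * ceil2 m <= ceil2 n.
Proof. by rewrite /ceil2 -expnS !ltn_exp2l // leq_exp2l. Qed.

(* [ceil2] can only grow from [n] to [n.+1] when [n] is itself a power of 2. *)
Lemma ceil2_jump n : ceil2 n < ceil2 n.+1 -> ceil2 n <= n.
Proof.
by apply: contraTT; rewrite -!ltnNge => lt_n; apply: ceil2_min.
Qed.

Lemma sub_in_count (T : eqType) (a1 a2 : pred T) (s : seq T) :
  {in s, forall x, a1 x -> a2 x} -> count a1 s <= count a2 s.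
Proof.
move=> sub12; rewrite -(eq_in_count (a1 := fun x => a1 x && (x \in s))).
  by apply: sub_count => x /andP[/sub12]; apply.
by move=> x s_x /=; rewrite s_x andbT.
Qed.

Lemma all_set_nth (T : Type) (P : pred T) x0 (s : seq T) i x :
  P x0 -> all P s -> P x -> all P (set_nth x0 s i x).
Proof.
move=> P0; elim: s i => [|y s IH] [|i] //=; first by move=> _ ->.
- by move=> _ Px; elim: i => [|i] /=; rewrite P0 //= Px.
- by move=> /andP[_ ->] ->.
- by move=> /andP[-> /IH]; apply.
Qed.

Lemma all_remove_at (T : eqType) (P : pred T) (s : seq T) i :
  all P s -> all P (remove_at s i).
Proof.
move=> /allP Ps; apply/allP => x; rewrite mem_cat.
by case/orP => [/mem_take | /mem_drop]; apply: Ps.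
Qed.

Lemma mem_foldl_select (T : eqType) (r : T -> T -> bool) a l :
  foldl (fun b j => if r j b then j else b) a l \in a :: l.
Proof.
elim: l a => [|b l IH] a /=; first exact: mem_head.
move/(_ (if r b a then b else a)): IH; rewrite !inE.
by case: ifP => _ /orP[] ->; rewrite ?orbT.
Qed.

Definition wclients (cs : seq wchan) : seq client := flatten (map snd cs).

Definition classified (ch : wchan) : bool := all (fun d : client => d.2 == ch.1) ch.2.

Lemma wclients_cat cs1 cs2 : wclients (cs1 ++ cs2) = wclients cs1 ++ wclients cs2.
Proof. by rewrite /wclients map_cat flatten_cat. Qed.

Lemma wclients_cons ch cs : wclients (ch :: cs) = ch.2 ++ wclients cs.
Proof. by []. Qed.

Lemma has_wclients (p : pred client) cs :
  has p (wclients cs) = has (fun ch : wchan => has p ch.2) cs.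
Proof. by elim: cs => //= ch cs IH; rewrite has_cat IH. Qed.

Lemma wclients_nth cs i : i < size cs ->
  wclients cs = wclients (take i cs) ++ (nth dflt_chan cs i).2 ++ wclients (drop i.+1 cs).
Proof.
by move=> lt_i; rewrite -{1}(cat_take_drop i cs) (drop_nth dflt_chan lt_i) wclients_cat.
Qed.

Lemma perm_wclients_set_nth cs i x : i < size cs ->
  perm_eq (wclients (set_nth dflt_chan cs i x) ++ (nth dflt_chan cs i).2)
          (x.2 ++ wclients cs).
Proof.
move=> lt_i; rewrite set_nthE lt_i (wclients_nth lt_i) wclients_cat wclients_cons.
by apply/permP => p; rewrite !count_cat; lia.
Qed.

Lemma perm_wclients_remove_at cs i : i < size cs ->
  perm_eq (wclients (remove_at cs i) ++ (nth dflt_chan cs i).2) (wclients cs).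
Proof.
move=> lt_i; rewrite /remove_at (wclients_nth lt_i) wclients_cat.
by apply/permP => p; rewrite !count_cat; lia.
Qed.

Lemma mem_nonfull_idx cs e i : i \in nonfull_idx cs e ->
  i < size cs /\ (nth dflt_chan cs i).1 = e.
Proof.
by rewrite mem_filter mem_iota add0n => /andP[/andP[/eqP -> _] /andP[_ ->]].
Qed.

Lemma pick_min_mem cs l i : pick_min cs l = Some i -> i \in l.
Proof. by case: l => //= a l [<-]; apply: mem_foldl_select. Qed.

Lemma perm_insert_client cs c :
  perm_eq (wclients (insert_client cs c)) (c :: wclients cs).
Proof.
rewrite /insert_client; case E: pick_min => [i|]; last first.
  by rewrite -cats1 wclients_cat wclients_cons cats0 perm_catC.
have [lt_i _] := mem_nonfull_idx (pick_min_mem E).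
rewrite -(perm_cat2r (nth dflt_chan cs i).2).
apply: perm_trans (perm_wclients_set_nth _ lt_i) _.
by apply/permP => p; rewrite /= -cats1 !count_cat /=; lia.
Qed.

Lemma insert_client_classified cs c :
  all classified cs -> all classified (insert_client cs c).
Proof.
move=> cs_ok; rewrite /insert_client; case E: pick_min => [i|]; last first.
  by rewrite all_rcons /classified /= eqxx cs_ok.
have [lt_i chan_i] := mem_nonfull_idx (pick_min_mem E).
apply: all_set_nth => //; have := allP cs_ok _ (mem_nth dflt_chan lt_i).
by rewrite /classified /= all_rcons chan_i eqxx.
Qed.

Lemma perm_foldl_insert_client cs ms :
  perm_eq (wclients (foldl insert_client cs ms)) (ms ++ wclients cs).
Proof.
elim: ms cs => [|m ms IH] cs //=; apply: perm_trans (IH _) _.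
have /permP ins_m := perm_insert_client cs m.
by apply/permP => p; rewrite !count_cat ins_m /= count_cat addnCA.
Qed.

Lemma foldl_insert_client_classified cs ms :
  all classified cs -> all classified (foldl insert_client cs ms).
Proof. by elim: ms cs => //= m ms IH cs /(insert_client_classified m)/IH. Qed.

Definition unassign_chans (cs : seq wchan) (i : nat) : seq wchan :=
  let k := find (fun ch : wchan => has (fun d => cid d == i) ch.2) cs in
  let ch := nth dflt_chan cs k in
  let ch1 := (ch.1, [seq d <- ch.2 | cid d != i]) in
  if k >= size cs then cs
  else if nilp ch1.2 then remove_at cs k
  else
    match [seq j <- nonfull_idx cs ch.1 | j != k] with
    | [::] => set_nth dflt_chan cs k ch1
    | j :: _ =>
        let chj := nth dflt_chan cs j in
        match chj.2 with
        | [::] => set_nth dflt_chan cs k ch1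
        | d :: rest =>
            set_nth dflt_chan (set_nth dflt_chan cs k (ch1.1, rcons ch1.2 d))
                    j (chj.1, rest)
        end
    end.

Lemma unassign_chans_classified cs i :
  all classified cs -> all classified (unassign_chans cs i).
Proof.
move=> cs_ok; rewrite /unassign_chans.
set k := find _ cs; set ch := nth dflt_chan cs k.
have class_nth j : classified (nth dflt_chan cs j).
  case: (ltnP j (size cs)) => [lt_j | ge_j]; first exact/(allP cs_ok)/mem_nth.
  by rewrite nth_default.
have class_filter (p : pred client) j :
    classified ((nth dflt_chan cs j).1, [seq d <- (nth dflt_chan cs j).2 | p d]).
  by apply/allP => d; rewrite mem_filter => /andP[_]; apply: (allP (class_nth j)).
case: leqP => // _; case: ifP => _; first exact: all_remove_at.
case E: [seq j <- _ | _] => [|j l].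
  by apply: all_set_nth => //; apply: class_filter.
have: j \in [seq j <- nonfull_idx cs ch.1 | j != k] by rewrite E mem_head.
rewrite mem_filter => /andP[_ /mem_nonfull_idx[_ chan_j]].
have := class_nth j; case E2: (nth dflt_chan cs j).2 => [|d rest].
  by move=> _; apply: all_set_nth => //; apply: class_filter.
rewrite /classified E2 chan_j /= => /andP[/eqP chan_d rest_ok].
apply: all_set_nth => //; apply: all_set_nth => //.
have := class_filter (fun d => cid d != i) k.
by rewrite /classified /= all_rcons chan_d eqxx.
Qed.

Lemma perm_unassign_chans cs i
    (k := find (fun ch : wchan => has (fun d => cid d == i) ch.2) cs)
    (ch := nth dflt_chan cs k) :
  k < size cs ->
  perm_eq (wclients (unassign_chans cs i) ++ [seq d <- ch.2 | cid d == i])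
          (wclients cs).
Proof.
move=> lt_k; set f := [seq d <- ch.2 | cid d != i].
suff /permP perm_ch : perm_eq (wclients (unassign_chans cs i) ++ ch.2) (f ++ wclients cs).
  have /permP split_ch : perm_eq ([seq d <- ch.2 | cid d == i] ++ f) ch.2.
    exact: permEl (perm_filterC _ _).
  by apply/permP => p; move: (perm_ch p) (split_ch p); rewrite !count_cat; lia.
rewrite /unassign_chans -/k -/ch leqNgt lt_k /= -/f.
case: ifP => [/nilP -> | _]; first exact: perm_wclients_remove_at.
case E: [seq j <- _ | _] => [|j l]; first exact: perm_wclients_set_nth.
have: j \in [seq j <- nonfull_idx cs ch.1 | j != k] by rewrite E mem_head.
rewrite mem_filter => /andP[ne_jk /mem_nonfull_idx[lt_j _]].
case E2: (nth dflt_chan cs j).2 => [|d rest]; first exact: perm_wclients_set_nth.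
set cs1 := set_nth dflt_chan cs k (ch.1, rcons f d).
have /permP perm1 : perm_eq (wclients cs1 ++ ch.2) (rcons f d ++ wclients cs).
  exact: perm_wclients_set_nth.
have lt_j1 : j < size cs1 by rewrite size_set_nth leq_max lt_j orbT.
have /permP := perm_wclients_set_nth ((nth dflt_chan cs j).1, rest) lt_j1.
rewrite /cs1 nth_set_nth /= (negbTE ne_jk) E2 -/cs1 => perm2.
apply/permP => p; move: (perm1 p) (perm2 p).
by rewrite !count_cat /= -cats1 count_cat /=; lia.
Qed.

Definition clients (s : state) : seq client := big s ++ wclients (chans s).

Record sound (s : state) (act : seq nat) : Prop := Sound {
  size_clients : size (clients s) <= nact s;
  active_clients : {subset act <= map cid (clients s)};
  big_laxity : all (fun d => tau s <= 2 * laxity d) (big s);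
  big_urgent : 4 * count (fun d => laxity d < tau s) (big s) <= tau s;
  chans_classified : all classified (chans s) }.

Definition alloc_inv (s : state) (act : seq nat) : Prop :=
  tau s = 2 * ceil2 (nact s) /\ sound s act.

(* The two phases of [arrive]: raising the threshold, which performs all the
   reallocations out of the big channel, then placing the new client. *)
Definition raise_tau (s : state) : state :=
  let n' := (nact s).+1 in
  if 2 * ceil2 n' > tau s then
    let t' := 2 * ceil2 n' in
    State n' t' [seq d <- big s | ~~ (laxity d < t' %/ 2)]
          (foldl insert_client (chans s) [seq d <- big s | laxity d < t' %/ 2])
  else State n' (tau s) (big s) (chans s).

Definition place (s : state) (c : client) : state :=
  if laxity c >= tau s then State (nact s) (tau s) (rcons (big s) c) (chans s)
  else State (nact s) (tau s) (big s) (insert_client (chans s) c).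

Lemma arrive_place s c : arrive s c = place (raise_tau s) c.
Proof. by rewrite /arrive /place /raise_tau; case: ifP. Qed.

Lemma nact_raise_tau s : nact (raise_tau s) = (nact s).+1.
Proof. by rewrite /raise_tau; case: ifP. Qed.

Lemma perm_clients_raise_tau s : perm_eq (clients (raise_tau s)) (clients s).
Proof.
suff perm_split (p : pred client) b cs : perm_eq
    ([seq d <- b | ~~ p d] ++ wclients (foldl insert_client cs [seq d <- b | p d]))
    (b ++ wclients cs).
  by rewrite /raise_tau /clients; case: ifP => //= _; apply: perm_split.
have /permP ins := perm_foldl_insert_client cs [seq d <- b | p d].
have /permP split_b : perm_eq ([seq d <- b | p d] ++ [seq d <- b | ~~ p d]) b.
  exact: permEl (perm_filterC _ _).
by apply/permP => q; move: (ins q) (split_b q); rewrite !count_cat; lia.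
Qed.

Lemma perm_clients_place s c : perm_eq (clients (place s c)) (c :: clients s).
Proof.
rewrite /place /clients; case: ifP => _ /=.
  by apply/permP => p; rewrite -cats1 !count_cat /= count_cat; lia.
have /permP ins := perm_insert_client (chans s) c.
by apply/permP => p; rewrite !count_cat ins /= count_cat; lia.
Qed.

Lemma alloc_inv_raise_tau s act : alloc_inv s act -> alloc_inv (raise_tau s) act.
Proof.
case=> tau_n [size_n act_cl lax_big urg_big cl_chans].
have perm_cl := perm_clients_raise_tau s.
rewrite /alloc_inv nact_raise_tau; split.
  rewrite /raise_tau; case: ltnP => //= le_tau.
  by apply/eqP; rewrite eqn_leq le_tau tau_n leq_mul2l ceil2_homo.
split.
- by rewrite (perm_size perm_cl) nact_raise_tau ltnW.
- by move=> j /act_cl; rewrite (perm_mem (perm_map cid perm_cl)).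
- rewrite /raise_tau; case: ifP => //= _; rewrite mulKn //.
  by apply/allP => d; rewrite mem_filter -leqNgt leq_mul2l => /andP[-> _].
- rewrite /raise_tau; case: ifP => //=; rewrite tau_n ltn_mul2l /= => lt_ceil2.
  have size_big : size (big s) <= nact s.
    by apply: leq_trans size_n; rewrite size_cat leq_addr.
  apply: (@leq_trans (4 * nact s)).
    rewrite leq_mul2l /=; apply: leq_trans (count_size _ _) _.
    by rewrite size_filter; apply: leq_trans (count_size _ _) size_big.
  by have := leq_ceil2 (nact s); have := ceil2_ltn_double lt_ceil2; lia.
- rewrite /raise_tau; case: ifP => //= _; exact: foldl_insert_client_classified.
Qed.

Lemma nact_place s c : nact (place s c) = nact s.
Proof. by rewrite /place; case: ifP. Qed.

Lemma tau_place s c : tau (place s c) = tau s.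
Proof. by rewrite /place; case: ifP. Qed.

Lemma sound_place s act c : sound s act -> size (clients s) < nact s ->
  sound (place s c) (cid c :: act).
Proof.
case=> _ act_cl lax_big urg_big cl_chans lt_size.
have perm_cl := perm_clients_place s c.
split; rewrite ?nact_place ?tau_place.
- by rewrite (perm_size perm_cl).
- move=> j; rewrite (perm_mem (perm_map cid perm_cl)) !inE.
  by case/orP=> [-> // | /act_cl ->]; rewrite orbT.
- rewrite /place; case: ifP => //= le_tau.
  by rewrite all_rcons lax_big andbT (leq_trans le_tau) // leq_pmull.
- rewrite /place; case: ifP => //= le_tau.
  by rewrite -cats1 count_cat /= ltnNge le_tau /= !addn0.
- by rewrite /place; case: ifP => //= _; apply: insert_client_classified.
Qed.

Lemma alloc_inv_arrive s act c :
  alloc_inv s act -> alloc_inv (arrive s c) (cid c :: act).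
Proof.
move=> inv_s; have [tau_n sound_s] := alloc_inv_raise_tau inv_s.
rewrite arrive_place; split; first by rewrite tau_place nact_place.
apply: sound_place => //.
by rewrite (perm_size (perm_clients_raise_tau s)) nact_raise_tau ltnS; case: inv_s => _ [].
Qed.

Lemma moved_out_of_big_sub s s1 s2 : {subset big s1 <= big s2} ->
  moved_out_of_big s s2 <= moved_out_of_big s s1.
Proof. by move=> sub12; apply: sub_count => d; apply: contra; apply: sub12. Qed.

Lemma moved_raise_tau s act : alloc_inv s act ->
  2 * moved_out_of_big s (raise_tau s) <= nact s.
Proof.
case=> tau_n [_ _ _ urg_big _]; rewrite /moved_out_of_big /raise_tau.
case: ifP => /= [lt_tau | _]; last first.
  by rewrite (eq_in_count (a2 := pred0)) ?count_pred0 // => d /= ->.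
have lt_ceil2 : ceil2 (nact s) < ceil2 (nact s).+1 by rewrite tau_n ltn_mul2l in lt_tau.
apply: (@leq_trans (2 * count (fun d => laxity d < tau s) (big s))).
  rewrite leq_mul2l /=; apply: sub_in_count => d big_d.
  rewrite mem_filter big_d andbT negbK mulKn // => lt_d.
  by rewrite tau_n (leq_trans lt_d) ?ceil2S.
by have := ceil2_jump lt_ceil2; move: urg_big; rewrite tau_n; lia.
Qed.

Lemma alloc_inv_depart_tau s act m :
  sound s act -> tau s = 2 * ceil2 m -> nact s <= m -> alloc_inv (depart_tau s) act.
Proof.
case=> size_n act_cl lax_big urg_big cl_chans tau_m le_nm.
rewrite /depart_tau; case: ltnP => [lt_tau | ge_tau]; last first.
  by split=> //; apply/eqP; rewrite eqn_leq ge_tau tau_m leq_mul2l ceil2_homo.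
set t' := 2 * ceil2 (nact s); set isbig := fun ch : wchan => 2 * t' < 2 ^ ch.1.
have le_tau : 2 * t' <= tau s.
  by move: lt_tau; rewrite tau_m ltn_mul2l /= => /ceil2_ltn_double; rewrite leq_mul2l.
have perm_cl : perm_eq (clients (State (nact s) t'
    (big s ++ flatten [seq ch.2 | ch <- chans s & isbig ch])
    [seq ch <- chans s | ~~ isbig ch])) (clients s).
  rewrite /clients /= -catA perm_cat2l -wclients_cat.
  exact/perm_flatten/perm_map/permEl/perm_filterC.
have lax_new d : d \in big s ++ flatten [seq ch.2 | ch <- chans s & isbig ch] ->
    t' <= laxity d.
  rewrite mem_cat => /orP[/(allP lax_big) | /flatten_mapP[ch]]; first lia.
  rewrite mem_filter => /andP[big_ch /(allP cl_chans) cl_ch] /(allP cl_ch) /eqP chan_d.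
  by rewrite /laxity chan_d; move: big_ch; rewrite /isbig; lia.
split=> //; split=> /=.
- by rewrite (perm_size perm_cl).
- by move=> j /act_cl; rewrite (perm_mem (perm_map cid perm_cl)).
- by apply/allP => d /lax_new; lia.
- rewrite (eq_in_count (a2 := pred0)) ?count_pred0 // => d /lax_new /=; lia.
- by apply/allP => ch; rewrite mem_filter => /andP[_ /(allP cl_chans)].
Qed.

Definition unassign (s : state) (i : nat) : state :=
  if has (fun d => cid d == i) (big s) then
    State (nact s).-1 (tau s) [seq d <- big s | cid d != i] (chans s)
  else State (nact s).-1 (tau s) (big s) (unassign_chans (chans s) i).

Lemma depart_unassign s i : depart s i = depart_tau (unassign s i).
Proof. by rewrite /depart /unassign; case: ifP. Qed.

Lemma perm_clients_unassign s i : has (fun d => cid d == i) (clients s) ->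
  exists2 r, has (fun d => cid d == i) r &
    perm_eq (clients (unassign s i) ++ [seq d <- r | cid d == i]) (clients s).
Proof.
rewrite /unassign /clients has_cat; case: ifP => //= [big_i _ | _].
  exists (big s) => //; rewrite -catA perm_catCA perm_catC perm_cat2r perm_catC.
  exact: permEl (perm_filterC _ _).
rewrite has_wclients => has_i; move: (has_i); rewrite has_find => lt_k.
have /= has_k := nth_find dflt_chan has_i.
by eexists; [exact: has_k | rewrite -catA perm_cat2l perm_unassign_chans].
Qed.

Lemma sound_unassign s act i : sound s act -> uniq act -> i \in act ->
  sound (unassign s i) (rem i act).
Proof.
case=> size_n act_cl lax_big urg_big cl_chans uniq_act act_i.
have has_i : has (fun d => cid d == i) (clients s).
  by have /mapP[d cl_d ->] := act_cl _ act_i; apply/hasP; exists d.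
have [r has_r perm_cl] := perm_clients_unassign has_i.
have sub_big : subseq (big (unassign s i)) (big s).
  by rewrite /unassign; case: ifP => /= _; rewrite ?filter_subseq.
have [nact_un tau_un] : nact (unassign s i) = (nact s).-1 /\ tau (unassign s i) = tau s.
  by rewrite /unassign; case: ifP.
split; rewrite ?nact_un ?tau_un.
- have lt_size : size (clients (unassign s i)) < size (clients s).
    rewrite -(perm_size perm_cl) (size_cat (clients _)) -[X in X < _]addn0 ltn_add2l.
    by rewrite size_filter -has_count.
  by rewrite -ltnS (ltn_predK (leq_trans lt_size size_n)) (leq_trans lt_size).
- move=> j; rewrite (rem_filter i uniq_act) mem_filter.
  move=> /andP[ne_ji /act_cl /mapP[d cl_d eq_j]]; rewrite eq_j in ne_ji *.
  apply: map_f; move: cl_d; rewrite -(perm_mem perm_cl) mem_cat mem_filter.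
  by rewrite (negbTE ne_ji) orbF.
- by apply/allP => d /(mem_subseq sub_big) /(allP lax_big).
- by apply: leq_trans urg_big; rewrite leq_mul2l leq_count_subseq.
- by rewrite /unassign; case: ifP => /= _; rewrite ?unassign_chans_classified.
Qed.

Lemma alloc_inv_depart s act i : alloc_inv s act -> uniq act -> i \in act ->
  alloc_inv (depart s i) (rem i act).
Proof.
case=> tau_n sound_s uniq_act act_i; rewrite depart_unassign.
apply: (@alloc_inv_depart_tau _ _ (nact s)); first exact: sound_unassign.
  by rewrite /unassign; case: ifP.
by rewrite /unassign; case: ifP => /=; rewrite leq_pred.
Qed.

Lemma alloc_inv_run es s act : valid_from act es -> alloc_inv s act -> uniq act ->
  exists act', alloc_inv (foldl step s es) act'.
Proof.
elim: es s act => [|[i e|i] es IH] s act /=; first by exists act.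
- case/andP=> fresh_i valid_es inv_s uniq_act; apply: (IH _ (i :: act)) => //.
    exact: (alloc_inv_arrive (i, e) inv_s).
  by rewrite /= fresh_i.
- case/andP=> act_i valid_es inv_s uniq_act; apply: (IH _ (rem i act)) => //.
    exact: alloc_inv_depart.
  exact: rem_uniq.
Qed.

Lemma valid_from_catl act es1 es2 : valid_from act (es1 ++ es2) -> valid_from act es1.
Proof. by elim: es1 act => [|[i e|i] es1 IH] act //= /andP[-> /IH]. Qed.

Lemma moved_arrive s act c : alloc_inv s act ->
  2 * moved_out_of_big s (arrive s c) <= nact (arrive s c).
Proof.
move=> inv_s; rewrite arrive_place nact_place nact_raise_tau.
apply: leq_trans (leqnSn _); apply: leq_trans (moved_raise_tau inv_s).
rewrite leq_mul2l moved_out_of_big_sub ?orbT // => d.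
by rewrite /place; case: ifP => //= _; rewrite mem_rcons inE orbC => ->.
Qed.

Theorem lemma2 (pre : seq event) (i e : nat) :
  valid (pre ++ [:: Arrive i e]) ->
  let s := run pre in
  let s' := step s (Arrive i e) in
  2 * moved_out_of_big s s' <= nact s'.
Proof.
move=> /valid_from_catl valid_pre /=.
have [act inv_s] : exists act, alloc_inv (run pre) act.
  by apply: alloc_inv_run valid_pre _ _; split.
exact: moved_arrive inv_s.
Qed.
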